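(* Let $\lambda_1,\lambda_2\in\mathbb{C}\setminus\{0,-1,-2,\dots\}$, set $\gamma=\lambda_1+\lambda_2-1$, and let $\alpha,\beta\in\mathbb{C}$ with $\alpha+\beta\notin\mathbb{Z}$, $\alpha\notin\{-1,-2,\dots\}$ and $\beta+\gamma\notin\{-1,-2,\dots\}$. On $W=V_{\lambda_1}\otimes V_{\lambda_2}$ put $H^{(1)}=H\otimes\mathbb{I}$, $H^{(2)}=\mathbb{I}\otimes H$, $D=H^{(1)}-H^{(2)}-\lambda_1+\lambda_2+2\alpha+2\beta+2$ (an invertible diagonal operator), and define $$\Delta(H)=H^{(1)}+H^{(2)},$$ $$\Delta(E)=D^{-1}\Big((H^{(1)}-\lambda_1+2\alpha+2\beta+2)(E\otimes\mathbb{I})+(\lambda_2-H^{(2)}+2\alpha+2\beta+2)(\mathbb{I}\otimes E)\Big),$$ $$\Delta(F)=D^{-1}\Big((H^{(1)}-\lambda_1+2\alpha+2)(H^{(1)}-\lambda_1+2\beta+2\gamma+2)(H^{(1)}+\lambda_1)^{-1}(F\otimes\mathbb{I})$$ $$\qquad\qquad+(\lambda_2-H^{(2)}+2\beta)(H^{(2)}-\lambda_2-2\alpha+2\gamma)(H^{(2)}+\lambda_2)^{-1}(\mathbb{I}\otimes F)\Big).$$ Then (a) these operators satisfy $[\Delta(H),\Delta(E)]=2\Delta(E)$, $[\Delta(H),\Delta(F)]=-2\Delta(F)$, $[\Delta(E),\Delta(F)]=\Delta(H)$, i.e. they give a representation of $sl_2$ on $W$; and (b) for all integers $0\le k\le N$,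 the vectors $w_{k,N}=\sum_{n=0}^N R_n(k,N)\,|\lambda_1,n\rangle\otimes|\lambda_2,N-n\rangle$ satisfy $\Delta(H)w_{k,N}=(\lambda_1+\lambda_2+2N)w_{k,N}$, $\Delta(E)w_{k,N}=w_{k,N+1}$ and $\Delta(F)w_{k,N}=-(N-k)(N+k+\gamma)\,w_{k,N-1}$ (with $w_{k,k-1}=0$); i.e. the $R_n(k,N)$ are Clebsch–Gordan coefficients for this generalized coproduct of $sl_2$.
   Context: $sl_2$ is generated by $H,E,F$ with $[H,E]=2E$, $[H,F]=-2F$, $[E,F]=H$. For $\lambda\in\mathbb{C}$, $V_\lambda$ has basis $\{|\lambda,n\rangle:n\ge0\}$ with $H|\lambda,n\rangle=(\lambda+2n)|\lambda,n\rangle$, $E|\lambda,n\rangle=|\lambda,n+1\rangle$, $F|\lambda,n\rangle=-n(n+\lambda-1)|\lambda,n-1\rangle$. The functions $R_n(k,N)$ (proportional to Racah polynomials) are $$R_n(k,N)=\binom{N}{n}\,{}_4F_3\!\left(\begin{matrix}-n,\ n+\alpha+\beta-N+1,\ -k,\ k+\gamma\\ \alpha+1,\ \beta+\gamma+1,\ -N\end{matrix}\;\Big|\;1\right)=\binom{N}{n}\sum_{j=0}^{\min(n,k)}\frac{(-n)_j(n+\alpha+\beta-N+1)_j(-k)_j(k+\gamma)_j}{j!(\alpha+1)_j(\beta+\gamma+1)_j(-N)_j},$$ with $(a)_j=a(a+1)\cdots(a+j-1)$. Operator products mean composition. *)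

From mathcomp Require Import all_boot all_algebra.
From mathcomp Require Import complex reals.
Set Implicit Arguments. Unset Strict Implicit. Unset Printing Implicit Defensive.
Import GRing.Theory Num.Theory.
Local Open Scope ring_scope.

Section Defs.
Variable C : fieldType.

(* Coordinates of a vector of V_lam : f n = coefficient of |lam,n>. *)
(* Coordinates of a vector of W = V_l1 (x) V_l2 :
   v n m = coefficient of |l1,n> (x) |l2,m>. *)
Definition Vec := nat -> nat -> C.

Definition Hs (lam : C) (f : nat -> C) : nat -> C :=
  fun n => (lam + 2 * n%:R) * f n.
Definition Es (f : nat -> C) : nat -> C :=
  fun n => if n is n'.+1 then f n' else 0.
(* F|lam,n> = -n(n+lam-1)|lam,n-1> *)
Definition Fs (lam : C) (f : nat -> C) : nat -> C :=
  fun n => - (n.+1%:R * (n%:R + lam)) * f n.+1.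

Definition tensL (A : (nat -> C) -> (nat -> C)) : Vec -> Vec :=
  fun v n m => A (fun n' => v n' m) n.
Definition tensR (A : (nat -> C) -> (nat -> C)) : Vec -> Vec :=
  fun v n m => A (v n) m.

Definition vscale (c : C) (v : Vec) : Vec := fun n m => c * v n m.
Definition opadd (A B : Vec -> Vec) : Vec -> Vec := fun v n m => A v n m + B v n m.
Definition opcomm (A B : Vec -> Vec) : Vec -> Vec :=
  fun v n m => A (B v) n m - B (A v) n m.
Definition opscale (c : C) (A : Vec -> Vec) : Vec -> Vec := fun v n m => c * A v n m.

(* Functional calculus g(H^(1), H^(2)) of the commuting diagonal operators
   H^(1) = H (x) I, H^(2) = I (x) H (joint eigenvalues l1+2n, l2+2m). *)
Definition fcalc (l1 l2 : C) (g : C -> C -> C) : Vec -> Vec :=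
  fun v n m => g (l1 + 2 * n%:R) (l2 + 2 * m%:R) * v n m.

Definition H1 (l1 : C) : Vec -> Vec := tensL (Hs l1).
Definition H2 (l2 : C) : Vec -> Vec := tensR (Hs l2).

Definition gam (l1 l2 : C) : C := l1 + l2 - 1.

(* eigenvalue function of D ; D^{-1} = fcalc of its inverse *)
Definition Dfun (l1 l2 a b : C) (x y : C) : C := x - y - l1 + l2 + 2 * a + 2 * b + 2.

Definition DeltaH (l1 l2 : C) : Vec -> Vec := opadd (H1 l1) (H2 l2).

Definition DeltaE (l1 l2 a b : C) : Vec -> Vec :=
  fcalc l1 l2 (fun x y => (Dfun l1 l2 a b x y)^-1) \o
  opadd (fcalc l1 l2 (fun x _ => x - l1 + 2 * a + 2 * b + 2) \o tensL Es)
        (fcalc l1 l2 (fun _ y => l2 - y + 2 * a + 2 * b + 2) \o tensR Es).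

Definition DeltaF (l1 l2 a b : C) : Vec -> Vec :=
  let g := gam l1 l2 in
  fcalc l1 l2 (fun x y => (Dfun l1 l2 a b x y)^-1) \o
  opadd (fcalc l1 l2 (fun x _ => (x - l1 + 2 * a + 2) * (x - l1 + 2 * b + 2 * g + 2)
                                  * (x + l1)^-1) \o tensL (Fs l1))
        (fcalc l1 l2 (fun _ y => (l2 - y + 2 * b) * (y - l2 - 2 * a + 2 * g)
                                  * (y + l2)^-1) \o tensR (Fs l2)).

(* finitely supported coordinate functions = vectors of the algebraic tensor product W *)
Definition finsupp (v : Vec) : Prop :=
  exists B : nat, forall n m : nat, (B <= n + m)%N -> v n m = 0.

Definition poch (a : C) (j : nat) : C := \prod_(i < j) (a + i%:R).

Definition Rfun (a b g : C) (n k N : nat) : C :=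
  'C(N, n)%:R *
  \sum_(j < (minn n k).+1)
     (poch (- n%:R) j * poch (n%:R + a + b - N%:R + 1) j * poch (- k%:R) j
        * poch (k%:R + g) j)
     / (j`!%:R * poch (a + 1) j * poch (b + g + 1) j * poch (- N%:R) j).

Definition wvec (a b g : C) (k N : nat) : Vec :=
  fun n m => if (n + m == N)%N then Rfun a b g n k N else 0.

End Defs.

(* In the coordinates v(n,m) of |l1,n> (x) |l2,m>, the operators DeltaH, DeltaE
   and DeltaF are diagonal, raising and lowering weighted shifts with coefficients
   rational in n and m, so the three sl2 relations become rational identities in n
   and m; the hypotheses on l1, l2 and a + b keep the denominators away from zero.
   DeltaE w(k,N) = w(k,N+1) reduces, term by term in the 4F3 sum, to a contiguous
   relation of the Racah summands.  DeltaF w(k,k) = 0 because its coordinates are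
   telescoping sums with an explicit hypergeometric antidifference; the formula for
   DeltaF w(k,N) then follows by induction on N from
   DeltaF DeltaE = DeltaE DeltaF - DeltaH. *)

From mathcomp Require Import all_boot all_algebra.
From mathcomp Require Import complex reals boolp.
From mathcomp Require Import ring.
Import GRing.Theory Num.Theory.
Local Open Scope ring_scope.
Local Open Scope complex_scope.

Section Pochhammer.
Context {C : fieldType}.
Implicit Types (x : C) (n j : nat).

Lemma poch0 x : poch x 0 = 1.
Proof. by rewrite /poch big_ord0. Qed.

Lemma pochSr x j : poch x j.+1 = poch x j * (x + j%:R).
Proof. by rewrite /poch big_ord_recr. Qed.

Lemma pochSl x y j : x + 1 = y -> poch x j.+1 = x * poch y j.
Proof.
move=> <-; rewrite /poch big_ord_recl addr0; congr (_ * _).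
by apply: eq_bigr => i _; rewrite lift0 -addrA nat1r.
Qed.

Lemma poch_natN_eq0 n j : (n < j)%N -> poch (- n%:R : C) j = 0.
Proof. by move=> ltnj; rewrite /poch (bigD1 (Ordinal ltnj)) //= addNr mul0r. Qed.

Lemma poch_neq0 x j : (forall i, (i < j)%N -> x + i%:R != 0) -> poch x j != 0.
Proof. by move=> neq0; apply/prodf_neq0 => i _; apply: neq0. Qed.

End Pochhammer.

Lemma poch_natN_neq0 (C : numFieldType) n j : (j <= n)%N -> poch (- n%:R : C) j != 0.
Proof.
move=> lejn; apply: poch_neq0 => i ltij.
by rewrite addrC subr_eq0 eqr_nat neq_ltn (leq_trans ltij lejn).
Qed.

Lemma weight_add_neq0 (C : numFieldType) (l : C) n : l <> - n%:R -> l + 2 * n%:R + l != 0.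
Proof.
move=> hl; rewrite (_ : _ + l = 2 * (l + n%:R)); last by ring.
by rewrite mulf_neq0 ?pnatr_eq0 // addr_eq0; apply/eqP.
Qed.

Lemma addr_natS_neq0 (C : numFieldType) (x : C) i :
  (forall n : nat, x <> - n.+1%:R) -> x + 1 + i%:R != 0.
Proof. by move=> hx; rewrite -addrA nat1r addr_eq0; apply/eqP/hx. Qed.

Lemma natr_binSr (C : numFieldType) n m :
  ('C((n + m).+1, n.+1)%:R : C) = 'C((n + m).+1, n)%:R * m.+1%:R / n.+1%:R.
Proof.
have := congr1 (fun k => k%:R : C) (mul_bin_left (n + m).+1 n).
rewrite !natrM -addnS addKn addnS => eq_bin.
by rewrite [_ * m.+1%:R]mulrC -eq_bin mulrC mulKf ?pnatr_eq0.
Qed.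

Lemma vec_ext (C : fieldType) (v w : Vec C) : (forall n m, v n m = w n m) -> v = w.
Proof. by move=> eq_vw; apply/funext => n; apply/funext => m; apply: eq_vw. Qed.

(* [field] leaves the nonvanishing of the denominators, in normal form: close each
   one with a hypothesis equal to it up to [ring]. *)
Ltac neq0_from_context :=
  repeat (apply/andP; split);
  match goal with h : is_true (?x != 0) |- is_true (?y != 0) =>
    first [exact: h | solve [rewrite (_ : y = x) //; ring]] end.

Section Coproduct.
Variable C : numFieldType.
Variables l1 l2 a b : C.
Hypothesis hl1 : forall n : nat, l1 <> - n%:R.
Hypothesis hl2 : forall n : nat, l2 <> - n%:R.
Hypothesis hab : forall z : int, a + b <> z%:~R.
Hypothesis ha : forall n : nat, a <> - n.+1%:R.
Hypothesis hbg : forall n : nat, b + gam l1 l2 <> - n.+1%:R.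
Local Notation gm := (gam l1 l2).
Local Notation w := (wvec a b gm).

Definition weightH (n m : nat) : C := l1 + l2 + 2 * (n%:R + m%:R).
Definition denD (n m : nat) : C := 2 * (n%:R - m%:R + a + b + 1).
Definition coefE1 (n : nat) : C := 2 * (n%:R + a + b + 1).
Definition coefE2 (m : nat) : C := 2 * (a + b + 1 - m%:R).
Definition coefF1 (n : nat) : C :=
  -2 * n.+1%:R * (n%:R + a + 1) * (n%:R + b + gm + 1).
Definition coefF2 (m : nat) : C :=
  -2 * m.+1%:R * (b - m%:R) * (m%:R - a + gm).

Lemma ab_shift_neq0 (p q : nat) : p%:R - q%:R + a + b + 1 != 0.
Proof.
apply/eqP => eq0; apply: (hab (q%:Z - p%:Z - 1)).
rewrite !intrB -[LHS]subr0 -eq0 /=; ring.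
Qed.

Lemma denD_neq0 n m : denD n m != 0.
Proof. by rewrite mulf_neq0 ?pnatr_eq0 ?ab_shift_neq0. Qed.

Lemma DeltaH_coord v n m : DeltaH l1 l2 v n m = weightH n m * v n m.
Proof. rewrite /DeltaH /opadd /H1 /H2 /tensL /tensR /Hs /weightH; ring. Qed.

Lemma Dfun_denD n m : Dfun l1 l2 a b (l1 + 2 * n%:R) (l2 + 2 * m%:R) = denD n m.
Proof. rewrite /Dfun /denD; ring. Qed.

Lemma DeltaE_coord v n m : DeltaE l1 l2 a b v n m =
  (denD n m)^-1 * (coefE1 n * (if n is n'.+1 then v n' m else 0) +
                   coefE2 m * (if m is m'.+1 then v n m' else 0)).
Proof.
rewrite /DeltaE /opadd /fcalc /tensL /tensR /Es /= Dfun_denD /coefE1 /coefE2.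
congr (_ * (_ * _ + _ * _)); ring.
Qed.

Lemma DeltaF_coord v n m : DeltaF l1 l2 a b v n m =
  (denD n m)^-1 * (coefF1 n * v n.+1 m + coefF2 m * v n m.+1).
Proof.
rewrite /DeltaF /opadd /fcalc /tensL /tensR /Fs /= Dfun_denD /coefF1 /coefF2.
by field; rewrite denD_neq0 !weight_add_neq0.
Qed.

Lemma DeltaH_DeltaE_comm v :
  opcomm (DeltaH l1 l2) (DeltaE l1 l2 a b) v = opscale 2 (DeltaE l1 l2 a b) v.
Proof.
apply: vec_ext => n m.
rewrite /opcomm /opscale DeltaH_coord !DeltaE_coord.
by case: n => [|n]; case: m => [|m]; rewrite ?DeltaH_coord /weightH; ring.
Qed.

Lemma DeltaH_DeltaF_comm v :
  opcomm (DeltaH l1 l2) (DeltaF l1 l2 a b) v = opscale (-2) (DeltaF l1 l2 a b) v.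
Proof.
apply: vec_ext => n m.
by rewrite /opcomm /opscale DeltaH_coord !DeltaF_coord !DeltaH_coord /weightH; ring.
Qed.

Lemma DeltaE_DeltaF_comm v :
  opcomm (DeltaE l1 l2 a b) (DeltaF l1 l2 a b) v = DeltaH l1 l2 v.
Proof.
apply: vec_ext => n m.
rewrite /opcomm DeltaE_coord DeltaF_coord DeltaH_coord.
(* As D depends only on n - m, the denominators are D at (n,m), (n+1,m) and (n,m+1). *)
have := ab_shift_neq0 n m.+1; have := ab_shift_neq0 n.+1 m; have := ab_shift_neq0 n m.
case: n => [|n]; case: m => [|m] => ? ? ?; rewrite ?DeltaE_coord ?DeltaF_coord /=;
  rewrite /denD /coefE1 /coefE2 /coefF1 /coefF2 /weightH /gam; field; neq0_from_context.
Qed.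

Definition racah_term (n k N j : nat) : C :=
  poch (- n%:R) j * poch (n%:R + a + b - N%:R + 1) j * poch (- k%:R) j * poch (k%:R + gm) j
  / (j`!%:R * poch (a + 1) j * poch (b + gm + 1) j * poch (- N%:R) j).

Lemma RfunE n k N :
  Rfun a b gm n k N = 'C(N, n)%:R * \sum_(j < k.+1) racah_term n k N j.
Proof.
rewrite /Rfun; congr (_ * _).
rewrite (big_ord_widen _ (racah_term n k N) (geq_minr n k : (minn n k).+1 <= k.+1)%N).
rewrite big_mkcond /=; apply: eq_bigr => j _; case: ifPn => //.
rewrite -leqNgt gtn_min [(k < j)%N]ltnNge leq_ord orbF => ltnj.
by rewrite /racah_term poch_natN_eq0 ?mul0r.
Qed.

Lemma Rfun0 k N : Rfun a b gm 0 k N = 1.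
Proof. by rewrite /Rfun min0n big_ord1 bin0 !poch0 fact0; field. Qed.

Lemma poch_a1_neq0 j : poch (a + 1) j != 0.
Proof. by apply: poch_neq0 => i _; apply: addr_natS_neq0. Qed.

Lemma poch_bg1_neq0 j : poch (b + gm + 1) j != 0.
Proof. by apply: poch_neq0 => i _; apply: addr_natS_neq0. Qed.

Lemma Rfun_diag k N : (k <= N)%N -> Rfun a b gm N k N = Rfun a b gm N.+1 k N.+1.
Proof.
move=> lekN; rewrite !RfunE !binn; congr (_ * _); apply: eq_bigr => [[j ltjk]] _ /=.
have lejN : (j <= N)%N by apply: leq_trans lekN.
have := @poch_natN_neq0 C _ _ (leqW lejN); have := @poch_natN_neq0 C _ _ lejN.
have := poch_a1_neq0 j; have := poch_bg1_neq0 j.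
have : (j`!%:R : C) != 0 by rewrite pnatr_eq0 -lt0n fact_gt0.
have cancelN p : p%:R + a + b - p%:R + 1 = a + b + 1 by ring.
rewrite /racah_term !cancelN => *.
by field; neq0_from_context.
Qed.

Lemma racah_term_contiguous n m k j : (j <= (n + m).+1)%N ->
  n.+1%:R * coefE1 n.+1 * racah_term n k (n + m).+1 j
  + m.+1%:R * coefE2 m.+1 * racah_term n.+1 k (n + m).+1 j
  = (n + m).+2%:R * denD n.+1 m.+1 * racah_term n.+1 k (n + m).+2 j.
Proof.
have := poch_a1_neq0 j; have := poch_bg1_neq0 j.
have : (j`!%:R : C) != 0 by rewrite pnatr_eq0 -lt0n fact_gt0.
have : ((n + m).+2%:R : C) != 0 by rewrite pnatr_eq0.
rewrite /racah_term /coefE1 /coefE2 /denD.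
case: j => [|j] ? ? ? ? lejN; first by rewrite !poch0; field; neq0_from_context.
(* Reduce the Pochhammer symbols of length j+1 to the common atoms (-n)_j,
   (n+a+b-N+2)_j and (-N)_j, where N = n+m+1, so that [field] can compare the terms. *)
rewrite (pochSr (- n%:R)) (@pochSl _ (- n.+1%:R) (- n%:R)); last by ring.
rewrite (pochSr (n.+1%:R + a + b - (n + m).+1%:R + 1)).
rewrite (@pochSl _ (n%:R + a + b - (n + m).+1%:R + 1) (n.+1%:R + a + b - (n + m).+1%:R + 1));
  last by ring.
rewrite (@pochSl _ (n.+1%:R + a + b - (n + m).+2%:R + 1) (n.+1%:R + a + b - (n + m).+1%:R + 1));
  last by ring.
rewrite (pochSr (- (n + m).+1%:R)) (@pochSl _ (- (n + m).+2%:R) (- (n + m).+1%:R)); last by ring.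
have := @poch_natN_neq0 C _ _ lejN; rewrite pochSr mulf_eq0 negb_or => /andP[? ?].
by field; neq0_from_context.
Qed.

Lemma Rfun_raise n m k : (k <= (n + m).+1)%N ->
  coefE1 n.+1 * Rfun a b gm n k (n + m).+1 + coefE2 m.+1 * Rfun a b gm n.+1 k (n + m).+1
  = denD n.+1 m.+1 * Rfun a b gm n.+1 k (n + m).+2.
Proof.
move=> lekN; rewrite !RfunE (binS (n + m).+1) natrD natr_binSr.
set S0 := \sum_(j < k.+1) racah_term n k _ j.
set S1 := \sum_(j < k.+1) racah_term n.+1 k _ j.
set S2 := \sum_(j < k.+1) racah_term n.+1 k _ j.
have sum_rel : n.+1%:R * coefE1 n.+1 * S0 + m.+1%:R * coefE2 m.+1 * S1
             = (n + m).+2%:R * denD n.+1 m.+1 * S2.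
  rewrite !mulr_sumr -big_split /=; apply: eq_bigr => j _.
  by apply: racah_term_contiguous; apply: leq_trans lekN; rewrite -ltnS.
have := denD_neq0 n.+1 m.+1; have : ((n + m).+2%:R : C) != 0 by rewrite pnatr_eq0.
have : (n.+1%:R : C) != 0 by rewrite pnatr_eq0.
move=> *; rewrite (_ : S2 = (n.+1%:R * coefE1 n.+1 * S0 + m.+1%:R * coefE2 m.+1 * S1)
                          / ((n + m).+2%:R * denD n.+1 m.+1)).
  by field; neq0_from_context.
by rewrite sum_rel [RHS]mulrC mulKf // mulf_neq0.
Qed.

Lemma DeltaE_wvec k N : (k <= N)%N -> DeltaE l1 l2 a b (w k N) = w k N.+1.
Proof.
move=> lekN; apply: vec_ext => n m; rewrite DeltaE_coord /wvec.
case: n => [|n]; case: m => [|m] /=; rewrite ?add0n ?addn0 ?addSn ?addnS ?eqSS.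
- by rewrite !mulr0 addr0 mulr0.
- case: eqP => [->|_]; last by rewrite !mulr0 addr0 mulr0.
  rewrite !Rfun0 mulr0 add0r mulr1 (_ : coefE2 N.+1 = denD 0 N.+1) ?mulVf ?denD_neq0 //.
  by rewrite /coefE2 /denD; ring.
- case: eqP => [->|_]; last by rewrite !mulr0 addr0 mulr0.
  rewrite Rfun_diag // mulr0 addr0 (_ : coefE1 N.+1 = denD N.+1 0).
    by rewrite mulKf ?denD_neq0.
  by rewrite /coefE1 /denD; ring.
- case: eqP => [eqN|_]; last by rewrite !mulr0 addr0 mulr0.
  by rewrite -eqN Rfun_raise ?eqN // mulKf ?denD_neq0.
Qed.

(* Gosper's antidifference of the summand in [racah_term_telescope]; it vanishes at
   both ends of the sum, as [poch (- n.+1%:R) (n + m).+2 = 0]. *)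
Definition racah_antidiff (n m j : nat) : C :=
  if j is j'.+1 then
    - (n%:R - m%:R + 1 + a + b) / n.+1%:R * (a + j'.+1%:R) * (b + gm + j'.+1%:R)
    * poch (- n.+1%:R) j'.+1 * poch (n.+1%:R + a + b - (n + m).+1%:R + 1) j'
    * poch ((n + m).+1%:R + gm) j'.+1
    / (j'`!%:R * poch (a + 1) j'.+1 * poch (b + gm + 1) j'.+1)
  else 0.

Lemma racah_term_telescope n m j : (j <= (n + m).+1)%N ->
  (n%:R + a + 1) * (n%:R + b + gm + 1) * racah_term n.+1 (n + m).+1 (n + m).+1 j
  + (b - m%:R) * (m%:R - a + gm) * racah_term n (n + m).+1 (n + m).+1 j
  = racah_antidiff n m j.+1 - racah_antidiff n m j.
Proof.
have : (n.+1%:R : C) != 0 by rewrite pnatr_eq0.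
rewrite /racah_term /racah_antidiff.
case: j => [|j] ? lejN.
  have := poch_a1_neq0 1; have := poch_bg1_neq0 1.
  by rewrite !pochSr !poch0 fact0 => *; field; neq0_from_context.
have := poch_a1_neq0 j.+1; have := poch_bg1_neq0 j.+1.
have := @poch_natN_neq0 C _ _ lejN.
have := @addr_natS_neq0 C a j.+1 ha; have := @addr_natS_neq0 C (b + gm) j.+1 hbg.
have : (j`!%:R : C) != 0 by rewrite pnatr_eq0 -lt0n fact_gt0.
have : (j.+1%:R : C) != 0 by rewrite pnatr_eq0.
move=> *.
rewrite (pochSr (- n.+1%:R) j.+1) (@pochSl _ (- n.+1%:R) (- n%:R)); last by ring.
rewrite (pochSr (- n%:R) j) (pochSr (n.+1%:R + a + b - (n + m).+1%:R + 1) j).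
rewrite (@pochSl _ (n%:R + a + b - (n + m).+1%:R + 1) (n.+1%:R + a + b - (n + m).+1%:R + 1));
  last by ring.
rewrite (pochSr ((n + m).+1%:R + gm) j.+1) (pochSr (a + 1) j.+1) (pochSr (b + gm + 1) j.+1).
by rewrite factS natrM; field; neq0_from_context.
Qed.

Lemma DeltaF_wvec_diag k : DeltaF l1 l2 a b (w k k) = (fun _ _ => 0).
Proof.
apply: vec_ext => n m; rewrite DeltaF_coord /wvec addSn addnS.
case: eqP => [<-|_]; last by rewrite !mulr0 addr0 mulr0.
rewrite !RfunE natr_binSr /coefF1 /coefF2.
set S1 := \sum_(j < _) racah_term n.+1 _ _ j; set S0 := \sum_(j < _) racah_term n _ _ j.
have telescope :
    (n%:R + a + 1) * (n%:R + b + gm + 1) * S1 + (b - m%:R) * (m%:R - a + gm) * S0 = 0.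
  pose G := racah_antidiff n m.
  rewrite !mulr_sumr -big_split /= (eq_bigr (fun j : 'I__ => G j.+1 - G j)) => [|j _]; last first.
    by apply: racah_term_telescope; rewrite -ltnS.
  rewrite -(big_mkord xpredT (fun j => G j.+1 - G j)) telescope_sumr //.
  by rewrite /G /racah_antidiff poch_natN_eq0 ?ltnS ?leq_addr // !(mulr0, mul0r, subr0).
have : (n.+1%:R : C) != 0 by rewrite pnatr_eq0.
move=> ?; rewrite -[RHS](mulr0 (denD n m)^-1) -(mulr0 (-2 * m.+1%:R * 'C((n + m).+1, n)%:R)).
by rewrite -telescope; congr (_ * _); field; neq0_from_context.
Qed.

Lemma DeltaH_wvec k N :
  DeltaH l1 l2 (w k N) = vscale (l1 + l2 + 2 * N%:R) (w k N).
Proof.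
apply: vec_ext => n m; rewrite DeltaH_coord /vscale /wvec /weightH.
by case: eqP => [<-|_]; rewrite ?natrD ?mulr0.
Qed.

Lemma DeltaE_vscale c v : DeltaE l1 l2 a b (vscale c v) = vscale c (DeltaE l1 l2 a b v).
Proof.
by apply: vec_ext => n m; rewrite /vscale !DeltaE_coord; case: n => [|n]; case: m => [|m]; ring.
Qed.

Lemma DeltaE_zero : DeltaE l1 l2 a b (fun _ _ => 0) = (fun _ _ => 0).
Proof.
by apply: vec_ext => n m; rewrite DeltaE_coord; case: n => [|n]; case: m => [|m]; ring.
Qed.

Lemma DeltaF_DeltaE v n m :
  DeltaF l1 l2 a b (DeltaE l1 l2 a b v) n m
  = DeltaE l1 l2 a b (DeltaF l1 l2 a b v) n m - DeltaH l1 l2 v n m.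
Proof. by rewrite -(DeltaE_DeltaF_comm v) /opcomm; ring. Qed.

Lemma DeltaF_wvec_lower k N : (k <= N)%N ->
  DeltaF l1 l2 a b (w k N.+1)
  = vscale (- ((N.+1 - k)%:R * (N.+1%:R + k%:R + gm))) (w k N).
Proof.
move=> lekN; rewrite -(subnK lekN); elim: (N - k)%N => [|d IHd];
  rewrite -DeltaE_wvec ?leq_addl //; apply: vec_ext => n m; rewrite DeltaF_DeltaE.
  rewrite add0n DeltaF_wvec_diag DeltaE_zero DeltaH_wvec /vscale subSnn /gam; ring.
rewrite addSn IHd DeltaE_vscale DeltaE_wvec ?leq_addl // DeltaH_wvec /vscale.
rewrite -!addSn !addnK !natrD /gam; ring.
Qed.

Lemma DeltaF_wvec k N : (k <= N)%N ->
  DeltaF l1 l2 a b (w k N)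
  = vscale (- ((N - k)%:R * (N%:R + k%:R + gm)))
      (if (k < N)%N then w k N.-1 else (fun _ _ => 0)).
Proof.
rewrite leq_eqVlt => /orP[/eqP <-|].
  by rewrite ltnn DeltaF_wvec_diag; apply: vec_ext => n m; rewrite /vscale mulr0.
by case: N => // N ltkN; rewrite ltkN DeltaF_wvec_lower.
Qed.

End Coproduct.

Theorem mainTheorem4 (R : realType) (l1 l2 a b : R[i])
  (hl1 : forall n : nat, l1 <> - n%:R)
  (hl2 : forall n : nat, l2 <> - n%:R)
  (hab : forall z : int, a + b <> z%:~R)
  (ha : forall n : nat, a <> - n.+1%:R)
  (hbg : forall n : nat, b + gam l1 l2 <> - n.+1%:R) :
  (forall v : Vec R[i], finsupp v ->
     [/\ opcomm (DeltaH l1 l2) (DeltaE l1 l2 a b) v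
           = opscale 2 (DeltaE l1 l2 a b) v,
         opcomm (DeltaH l1 l2) (DeltaF l1 l2 a b) v
           = opscale (-2) (DeltaF l1 l2 a b) v &
         opcomm (DeltaE l1 l2 a b) (DeltaF l1 l2 a b) v
           = DeltaH l1 l2 v])
  /\
  (forall k N : nat, (k <= N)%N ->
     let g := gam l1 l2 in
     [/\ DeltaH l1 l2 (wvec a b g k N)
           = vscale (l1 + l2 + 2 * N%:R) (wvec a b g k N),
         DeltaE l1 l2 a b (wvec a b g k N) = wvec a b g k N.+1 &
         DeltaF l1 l2 a b (wvec a b g k N)
           = vscale (- ((N - k)%:R * (N%:R + k%:R + g)))
               (if (k < N)%N then wvec a b g k N.-1 else (fun _ _ => 0))]).
Proof.
(* The relations hold on every coefficient array. *)
split=> [v _|k N lekN g]; split.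
- exact: DeltaH_DeltaE_comm.
- exact: DeltaH_DeltaF_comm.
- exact: DeltaE_DeltaF_comm.
- exact: DeltaH_wvec.
- exact: DeltaE_wvec.
- exact: DeltaF_wvec.
Qed.
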